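(* Let $p\colon E\to B$ be an arc-covering with $E$ path-connected. Then every fiber $p^{-1}(b)$, $b\in B$ (with the subspace topology from $E$), is a $T_1$-space.
   Context: All maps are continuous. A map $p\colon E\to B$ is an arc-covering if (i) for every $e_0\in E$, every $t_0\in[0,1]$ and every map $f\colon [0,1]\to B$ with $f(t_0)=p(e_0)$ there is a map $g\colon[0,1]\to E$ with $p\circ g=f$ and $g(t_0)=e_0$, and (ii) such lifts are unique: if $g,h\colon[0,1]\to E$ satisfy $p\circ g=p\circ h$ and $g(t_0)=h(t_0)$ for some $t_0$, then $g=h$. *)

From HB Require Import structures.
From mathcomp Require Import all_boot all_order all_algebra.
From mathcomp Require Import all_classical all_reals all_analysis.
From mathcomp Require Import Rstruct Rstruct_topology.
Set Implicit Arguments. Unset Strict Implicit. Unset Printing Implicit Defensive.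
Import Order.TTheory GRing.Theory Num.Theory.
Local Open Scope classical_set_scope.
Local Open Scope ring_scope.

Definition unit_itv : set Rdefinitions.R := `[0%R, 1%R].
Definition I01 : topologicalType := set_type unit_itv.

Lemma unit_itv0 : (0%R : Rdefinitions.R) \in unit_itv.
Proof. by apply/mem_set; rewrite /unit_itv /= in_itv /= lexx ler01. Qed.
Lemma unit_itv1 : (1%R : Rdefinitions.R) \in unit_itv.
Proof. by apply/mem_set; rewrite /unit_itv /= in_itv /= lexx ler01. Qed.

Definition i0 : I01 := exist _ 0%R unit_itv0.
Definition i1 : I01 := exist _ 1%R unit_itv1.

Definition path_connected (E : topologicalType) : Prop :=
  forall x y : E, exists f : I01 -> E,
    continuous f /\ f i0 = x /\ f i1 = y.

Definition arc_covering (E B : topologicalType) (p : E -> B) : Prop :=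
  continuous p /\
  (forall (e0 : E) (t0 : I01) (f : I01 -> B),
      continuous f -> f t0 = p e0 ->
      exists g : I01 -> E, continuous g /\ p \o g = f /\ g t0 = e0) /\
  (forall (g h : I01 -> E) (t0 : I01),
      continuous g -> continuous h -> p \o g = p \o h -> g t0 = h t0 ->
      g = h).

Definition fiber (E B : Type) (p : E -> B) (b : B) : set E := p @^-1` [set b].

(* If two points x != y of a fiber cannot be separated by an open set of the
   fiber, then every neighbourhood of x in E contains y.  The path that stays
   at y on [0,1) and jumps to x at time 1 is then continuous; it projects to
   the constant path at b, as does the constant path at y, and both start at
   y.  Uniqueness of lifts forces x = y. *)

From mathcomp Require Import all_boot all_order all_algebra.
From mathcomp Require Import all_classical all_reals all_analysis.
From mathcomp Require Import Rstruct Rstruct_topology.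
Import Order.TTheory GRing.Theory Num.Theory.
Local Open Scope classical_set_scope.
Local Open Scope ring_scope.

Lemma closure_set1P {T : topologicalType} (x y : T) :
  closure [set y] x <-> forall B, nbhs x B -> B y.
Proof.
split=> [xy B /xy [_ [/= -> //]] | xy B /xy By].
by exists y.
Qed.

Lemma not_separated_closure_set1 {T : topologicalType} (x y : T) :
  ~ (exists A, [/\ open A, x \in A & y \in ~` A]) -> closure [set y] x.
Proof.
move=> nsep; apply/closure_set1P => B; rewrite nbhsE => -[U [oU Ux] UB].
apply: UB; apply: contrapT => nUy; apply: nsep.
by exists U; split=> //; apply/mem_set.
Qed.

Lemma continuous_closure_set1 {S T : topologicalType} (f : S -> T) {x y : S} :
  continuous f -> closure [set y] x -> closure [set f y] (f x).
Proof.
move=> cf /closure_set1P xy; apply/closure_set1P => B Bfx.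
exact: (xy (f @^-1` B) (cf x B Bfx)).
Qed.

(* Continuity at time 1 is the hypothesis; elsewhere the path is locally
   constant. *)
Lemma jump_path_continuous {T : topologicalType} {x y : T} :
  closure [set y] x ->
  continuous (fun t : I01 => if val t == 1 then x else y).
Proof.
move=> /closure_set1P xy t.
have [t1|t1] := eqVneq (val t) 1.
  move=> N; rewrite /= t1 eqxx => Nx.
  apply: (@filterS _ (nbhs t) _ setT _ _ filterT) => s _ /=.
  by case: ifP => _; [exact: nbhs_singleton | exact: xy].
have ne1 : nbhs t [set s : I01 | val s != 1].
  apply: (@initial_continuous I01 _ set_val t [set r | r != 1]).
  by apply: open_nbhs_nbhs; split; [exact: open_neq | rewrite /= set_valE].
move=> N; rewrite /= (negbTE t1) => Ny.
apply: (@filterS _ (nbhs t) _ _ _ _ ne1) => s /= s1.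
by rewrite (negbTE s1); exact: nbhs_singleton.
Qed.

Theorem proposition2p4 (E B : topologicalType) (p : E -> B) :
  arc_covering p -> path_connected E ->
  forall b : B, @accessible_space (set_type (fiber p b)).
Proof.
move=> [_ [_ lift_uniq]] _ b x y xy; apply: contrapT => nsep.
have xy_cl : closure [set set_val y] (set_val x).
  apply: continuous_closure_set1; last exact: not_separated_closure_set1.
  exact: (@initial_continuous (set_type (fiber p b)) E set_val).
pose g (t : I01) := if val t == 1 then set_val x else set_val y.
pose h (t : I01) := set_val y.
have ch : continuous h by exact: cst_continuous.
have px : p (set_val x) = b := set_valP x.
have py : p (set_val y) = b := set_valP y.
have pg : p \o g = p \o h.
  by apply/funext => t; rewrite /= /g /h; case: ifP => _; rewrite ?px ?py.
have g0 : g i0 = h i0 by rewrite /g /h /= eq_sym oner_eq0.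
have := lift_uniq g h i0 (jump_path_continuous xy_cl) ch pg g0.
move=> /(congr1 (fun f => f i1)); rewrite /g /h /= eqxx => exy.
by move/eqP: xy; apply; apply: val_inj; rewrite /= -!set_valE.
Qed.
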